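(* Let $\mathscr D$ be a cyclic symmetric $(v,k,\lambda)$ design and let $p$ be a prime dividing $k-\lambda$ but not dividing $v$. Then $\mathscr D$ is additive under $\mathrm{EA}(p^t)$, where $t=\mathrm{ord}_v(p)$.
   Context: A symmetric $(v,k,\lambda)$ design is a $2$-$(v,k,\lambda)$ design $(V,\mathscr B)$ with as many blocks as points. It is cyclic if there is a cyclic permutation of $V$ (a permutation acting as a single $v$-cycle) leaving $\mathscr B$ invariant. $\mathrm{EA}(p^t)$ denotes the elementary abelian group of order $p^t$ (the additive group of $\mathbb{F}_{p^t}$), and $\mathrm{ord}_v(p)$ is the multiplicative order of $p$ modulo $v$. A design $(V,\mathscr B)$ is additive under an abelian group $G$ if there is an injective map $f:V\to G$ such that $\sum_{x\in B}f(x)=0$ for every block $B\in\mathscr B$. *)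

From HB Require Import structures.
From mathcomp Require Import all_boot all_order all_algebra all_fingroup.
Set Implicit Arguments. Unset Strict Implicit. Unset Printing Implicit Defensive.
Import GRing.Theory.

Definition symmetric_design (V : finType) (Bs : {set {set V}})
  (v k lambda : nat) : Prop :=
  [/\ #|V| = v,
      (forall B, B \in Bs -> #|B| = k),
      (forall x y : V, x != y -> #|[set B in Bs | (x \in B) && (y \in B)]| = lambda)
    & #|Bs| = v].

Definition is_full_cycle (V : finType) (s : {perm V}) : Prop :=
  forall x : V, porbit s x = [set: V].

Definition cyclic_design (V : finType) (Bs : {set {set V}}) : Prop :=
  exists s : {perm V}, is_full_cycle s /\ [set (s @: B) | B : {set V} in Bs] = Bs.

Definition is_mult_order (v p t : nat) : Prop :=
  [/\ 0 < t, p ^ t = 1 %[mod v]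
    & forall s, 0 < s -> p ^ s = 1 %[mod v] -> t <= s].

Definition additive_under (V : finType) (Bs : {set {set V}}) (G : zmodType) : Prop :=
  exists f : V -> G, injective f /\
    forall B, B \in Bs -> (\sum_(x in B) f x)%R = 0%R.

(* Write the points as s^i(x0), i < v, for the cycle s, and let w be a
   primitive v-th root of unity in F = GF(p^t); it exists because
   v | p^t - 1.  Put chi(s^i(x0)) = w^i.  In a symmetric design two distinct
   blocks meet in lambda points, so for a block B and 0 < d < v the set
   {y in B | s^d y in B} has k or lambda elements; these numbers add up to
   k^2 - k = (v - 1) lambda, hence all of them equal lambda.  Consequently
   (sum_B chi) (sum_B chi^-1) = k + lambda (w + ... + w^(v-1)) = k - lambda,
   which is 0 in characteristic p.  So chi or chi^-1 sums to 0 over B, and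
   since the blocks are the v translates s^d(B), on which the sums get
   multiplied by powers of w, it sums to 0 over every block.  Finally F is
   additively isomorphic to EA(p^t). *)

From HB Require Import structures.
From mathcomp Require Import all_boot all_order all_algebra all_fingroup.
From mathcomp Require Import cyclic finfield.
From mathcomp Require Import zify ring.

Set Implicit Arguments.
Unset Strict Implicit.
Unset Printing Implicit Defensive.

Import GRing.Theory Num.Theory passmx.

Lemma card_sep_sum (T : finType) (A : {set T}) (P : pred T) :
  #|[set x in A | P x]| = \sum_(x in A) P x.
Proof.
rewrite -sum1_card [RHS]big_mkcond [LHS]big_mkcond /=.
by apply: eq_bigr => x _; rewrite inE; case: (x \in A); case: (P x).
Qed.

Lemma card_setI_sum (T : finType) (A B : {set T}) :
  #|A :&: B| = \sum_(x in A) (x \in B).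
Proof. by rewrite -card_sep_sum; apply: eq_card => x; rewrite !inE. Qed.

Lemma moments_eq_const (I : finType) (P : {pred I}) (a : I -> nat) (c : nat) :
    \sum_(i in P) a i = #|P| * c -> \sum_(i in P) a i ^ 2 = #|P| * c ^ 2 ->
  {in P, forall i, a i = c}.
Proof.
move=> sum1 sum2; pose e i := (((a i)%:Z - c%:Z) ^+ 2)%R.
have sum_e : (\sum_(i in P) e i = 0)%R.
  have expand i : e i = ((a i ^ 2)%:Z - (a i)%:Z * (2 * c)%:Z + (c ^ 2)%:Z)%R.
    by rewrite /e !expnS !expn0 !muln1 !PoszM; ring.
  rewrite (eq_bigr _ (fun i _ => expand i)) !big_split /= sumrN -mulr_suml.
  rewrite sumr_const -!(big_morph Posz PoszD (erefl (Posz 0))) sum1 sum2.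
  by rewrite -mulr_natr -natz; lia.
move=> i Pi; have /eqP := psumr_eq0P (fun j _ => sqr_ge0 _) sum_e Pi.
by rewrite expf_eq0 /= subr_eq0 eqz_nat => /eqP.
Qed.

Lemma leq_sum_eq (I : finType) (P : pred I) (E1 E2 : I -> nat) :
    (forall i, P i -> E1 i <= E2 i) ->
    \sum_(i | P i) E2 i <= \sum_(i | P i) E1 i ->
  forall i, P i -> E1 i = E2 i.
Proof.
move=> le12 ge21.
have /leqif_sum[_] : forall i, P i -> E1 i <= E2 i ?= iff (E1 i == E2 i).
  by move=> i Pi; split; first exact: le12.
by rewrite eqn_leq ge21 leq_sum // => /esym/forall_inP eq12 i /eq12/eqP.
Qed.

Section FullCycle.

Variables (V : finType) (s : {perm V}).
Hypothesis s_full : is_full_cycle s.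
Local Notation v := #|V|.

Lemma iter_perm_inj n : injective (iter n s).
Proof. by move=> x y; rewrite -!permX; apply: perm_inj. Qed.

Lemma iter_full_cycle x : iter v s x = x.
Proof. by have := iter_porbit s x; rewrite s_full cardsT. Qed.

Lemma iter_mod_card n x : iter n s x = iter (n %% v) s x.
Proof.
have iter_mul q y : iter (q * v) s y = y.
  by elim: q => //= q IHq; rewrite mulSn iterD IHq iter_full_cycle.
by rewrite {1}(divn_eq n v) addnC iterD iter_mul.
Qed.

Lemma uniq_traject_full x : uniq (traject s x v).
Proof. by have := uniq_traject_porbit s x; rewrite s_full cardsT. Qed.

Lemma mem_traject_full x y : y \in traject s x v.
Proof. by have := porbit_traject s x y; rewrite s_full cardsT inE. Qed.

Definition cycle_index x y := index y (traject s x v).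

Lemma cycle_index_lt x y : cycle_index x y < v.
Proof.
by rewrite -[X in _ < X](size_traject s x) index_mem mem_traject_full.
Qed.

Lemma iter_cycle_index x y : iter (cycle_index x y) s x = y.
Proof.
by rewrite -(nth_traject s (cycle_index_lt x y)) nth_index ?mem_traject_full.
Qed.

Lemma cycle_index_iter x n : cycle_index x (iter n s x) = n %% v.
Proof.
have v_gt0 : 0 < v by apply/card_gt0P; exists x.
have n_lt : n %% v < v by rewrite ltn_mod.
rewrite iter_mod_card /cycle_index -(nth_traject s n_lt).
by rewrite index_uniq ?size_traject ?uniq_traject_full.
Qed.

Lemma iter_ord_bij x : bijective (fun d : 'I_v => iter d s x).
Proof.
exists (fun y => Ordinal (cycle_index_lt x y)) => [d|y].
  by apply: val_inj; rewrite /= cycle_index_iter modn_small.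
exact: iter_cycle_index.
Qed.

Lemma big_traject_full (R : Type) (idx : R) (op : Monoid.com_law idx) x
    (F : V -> R) :
  \big[op/idx]_(d < v) F (iter d s x) = \big[op/idx]_y F y.
Proof. by rewrite [RHS](reindex _ (onW_bij _ (iter_ord_bij x))). Qed.

Definition overlap (B : {set V}) d := #|[set y in B | iter d s y \in B]|.

Lemma overlap0 B : overlap B 0 = #|B|.
Proof. by apply: eq_card => y; rewrite !inE andbb. Qed.

Lemma sum_overlap B : \sum_(d < v) overlap B d = #|B| ^ 2.
Proof.
under eq_bigr => d _ do rewrite /overlap card_sep_sum.
rewrite exchange_big /= -mulnn -sum_nat_const; apply: eq_bigr => y _.
rewrite (big_traject_full addn y (fun x => x \in B)) -sum1_card [RHS]big_mkcond.
by apply: eq_bigr => x _; case: (x \in B).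
Qed.

End FullCycle.

Section IncidenceCounting.

Variables (V : finType) (Bs : {set {set V}}).

Definition replication x := #|[set B in Bs | x \in B]|.
Definition covalency x y := #|[set B in Bs | (x \in B) && (y \in B)]|.

Lemma sum_card_setI_blocks A :
  \sum_(B in Bs) #|A :&: B| = \sum_(x in A) replication x.
Proof.
under eq_bigr => B _ do rewrite card_setI_sum.
rewrite exchange_big; apply: eq_bigr => x _.
by rewrite /replication card_sep_sum.
Qed.

Lemma sum_card_setI2_blocks A A' :
  \sum_(B in Bs) #|A :&: B| * #|A' :&: B| =
  \sum_(x in A) \sum_(y in A') covalency x y.
Proof.
under eq_bigr => B _ do rewrite !card_setI_sum big_distrl /=.
under eq_bigr => B _ do under eq_bigr => x _ do rewrite big_distrr /=.
rewrite exchange_big; apply: eq_bigr => x _.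
rewrite exchange_big; apply: eq_bigr => y _.
rewrite /covalency card_sep_sum; apply: eq_bigr => B _.
by case: (x \in B); case: (y \in B).
Qed.

End IncidenceCounting.

Section SymmetricDesign.

Variables (V : finType) (Bs : {set {set V}}) (k lam : nat).
Hypothesis block_size : forall B, B \in Bs -> #|B| = k.
Hypothesis covalency_lam : forall x y : V, x != y -> covalency Bs x y = lam.
Hypothesis card_blocks : #|Bs| = #|V|.
Hypothesis replication_k : forall x, replication Bs x = k.
Hypothesis V_gt1 : 1 < #|V|.

Lemma sum_covalency (A : {set V}) x :
  x \in A -> \sum_(y in A) covalency Bs x y = k + #|A|.-1 * lam.
Proof.
move=> Ax; rewrite (big_setD1 x) //= -(replication_k x); congr (_ + _).
  by apply: eq_card => B; rewrite !inE andbb.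
rewrite (cardsD1 x A) Ax -sum_nat_const; apply: eq_bigr => y.
by rewrite !inE => /andP[yx _]; rewrite covalency_lam // eq_sym.
Qed.

Lemma symmetric_design_eq : k * k = k + #|V|.-1 * lam.
Proof.
have /card_gt0P[x _] := ltnW V_gt1.
have := sum_card_setI2_blocks Bs [set x] setT.
rewrite big_set1 (sum_covalency (in_setT x)) cardsT => <-.
rewrite -{1}(replication_k x) -(@big_set1 _ 0 addn _ x (replication Bs)).
rewrite -sum_card_setI_blocks big_distrl /=.
by apply: eq_bigr => B BBs; rewrite setTI (block_size BBs).
Qed.

Lemma block_size_range : 0 < k < #|V|.
Proof.
have single_block B0 : ~ {in Bs, forall B, B = B0}.
  move=> allB0; have : Bs \subset [set B0].
    by apply/subsetP => B /allB0 ->; rewrite inE.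
  by move/subset_leq_card; rewrite cards1 card_blocks leqNgt V_gt1.
have /card_gt0P[B0 B0Bs] : 0 < #|Bs| by rewrite card_blocks (ltnW V_gt1).
have k_le : k <= #|V| by rewrite -(block_size B0Bs) max_card.
have k_neq0 : k != 0.
  apply/eqP => k0; apply: (single_block set0) => B /block_size.
  by rewrite k0 => /eqP; rewrite cards_eq0 => /eqP.
have k_neqv : k != #|V|.
  apply/eqP => kv; apply: (single_block setT) => B BBs.
  by apply/eqP; rewrite eqEcard subsetT cardsT (block_size BBs) kv leqnn.
by rewrite lt0n k_neq0 ltn_neqAle k_neqv k_le.
Qed.

Lemma lam_lt_k : lam < k.
Proof. have := symmetric_design_eq; have := block_size_range; nia. Qed.

Lemma card_setI_blocks B C :
  B \in Bs -> C \in Bs -> B != C -> #|B :&: C| = lam.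
Proof.
move=> BBs CBs BC.
have eq_k : k * k.-1 = #|V|.-1 * lam by have := symmetric_design_eq; nia.
have card_others : #|Bs :\ B| = #|V|.-1.
  by rewrite -card_blocks (cardsD1 B Bs) BBs.
have meet_B : #|B :&: B| = k by rewrite setIid block_size.
have sum1 : \sum_(D in Bs) #|B :&: D| = k * k.
  rewrite sum_card_setI_blocks (eq_bigr (fun _ => k)) // sum_nat_const.
  by rewrite block_size.
have sum2 : \sum_(D in Bs) #|B :&: D| ^ 2 = k * (k + k.-1 * lam).
  under eq_bigr do rewrite -mulnn.
  rewrite sum_card_setI2_blocks (eq_bigr (fun _ => k + k.-1 * lam)).
    by rewrite sum_nat_const block_size.
  by move=> x xB; rewrite sum_covalency // block_size.
rewrite (big_setD1 B) //= meet_B in sum1.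
rewrite (big_setD1 B) //= meet_B in sum2.
apply: (moments_eq_const (P := Bs :\ B) (a := fun D => #|B :&: D|)).
- by rewrite /= card_others -eq_k; nia.
- by rewrite /= card_others mulnA -eq_k; nia.
- by rewrite !inE eq_sym BC.
Qed.

End SymmetricDesign.

Section Equivariant.

Local Open Scope ring_scope.

Variables (V : finType) (s : {perm V}) (R : pzRingType) (f : V -> R) (c : R).
Hypothesis f_perm : forall x, f (s x) = c * f x.

Lemma iter_equivariant d x : f (iter d s x) = c ^+ d * f x.
Proof.
by elim: d => [|d IHd]; rewrite ?mul1r // iterS f_perm IHd mulrA -exprS.
Qed.

Lemma sum_translate d (B : {set V}) :
  \sum_(x in iter d s @: B) f x = c ^+ d * \sum_(x in B) f x.
Proof.
rewrite big_imset /=; last by move=> x y _ _; exact: iter_perm_inj.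
by rewrite mulr_sumr; apply: eq_bigr => x _; rewrite iter_equivariant.
Qed.

End Equivariant.

Section EquivariantField.

Local Open Scope ring_scope.

Variables (V : finType) (s : {perm V}) (F : fieldType) (f : V -> F) (c : F).
Hypothesis s_full : is_full_cycle s.
Hypothesis f_perm : forall x, f (s x) = c * f x.
Hypothesis f_neq0 : forall x, f x != 0.

Lemma sum_mul_sum_inv (B : {set V}) :
  (\sum_(x in B) f x) * (\sum_(y in B) (f y)^-1) =
  \sum_(d < #|V|) (overlap s B d)%:R * c ^+ d.
Proof.
have shift y : (\sum_(x in B) f x) * (f y)^-1 =
               \sum_(d < #|V|) (iter d s y \in B)%:R * c ^+ d.
  rewrite big_mkcond mulr_suml -(big_traject_full s_full _ y) /=.
  apply: eq_bigr => d _; rewrite (iter_equivariant f_perm).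
  by case: (_ \in B); rewrite ?mul1r ?mul0r ?mulfK.
rewrite mulr_sumr (eq_bigr _ (fun y _ => shift y)) exchange_big /=.
by apply: eq_bigr => d _; rewrite -mulr_suml /overlap card_sep_sum natr_sum.
Qed.

End EquivariantField.

Section CyclePower.

Local Open Scope ring_scope.

Variables (V : finType) (s : {perm V}) (R : nzRingType) (w : R) (x0 : V).
Hypothesis s_full : is_full_cycle s.
Hypothesis w_prim : #|V|.-primitive_root w.

Definition cycle_power x := w ^+ cycle_index s x0 x.

Lemma cycle_power_perm x : cycle_power (s x) = w * cycle_power x.
Proof.
rewrite /cycle_power -{1}(iter_cycle_index s_full x0 x) -iterS.
by rewrite cycle_index_iter // (prim_expr_mod w_prim) exprS.
Qed.

Lemma cycle_power_inj : injective cycle_power.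
Proof.
move=> x y /eqP; rewrite (eq_prim_root_expr w_prim).
rewrite !modn_small ?cycle_index_lt // => /eqP eq_xy.
by rewrite -(iter_cycle_index s_full x0 x) eq_xy iter_cycle_index.
Qed.

End CyclePower.

Lemma sum_prim_root_expr (F : fieldType) n (z : F) :
  n.-primitive_root%R z -> 1 < n -> (\sum_(i < n) z ^+ i = 0)%R.
Proof.
move=> z_prim n_gt1; have z_neq1 : z != 1%R.
  apply: contraTneq n_gt1 => z1; move: (prim_order_dvd z_prim 1).
  by rewrite expr1 z1 eqxx dvdn1 => /eqP ->.
have := subrX1 z n; rewrite (prim_expr_order z_prim) subrr => /esym/eqP.
by rewrite mulf_eq0 subr_eq0 (negbTE z_neq1) => /eqP.
Qed.

Section CyclicDesign.

Variables (V : finType) (Bs : {set {set V}}) (k lam : nat) (s : {perm V}).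
Hypothesis block_size : forall B, B \in Bs -> #|B| = k.
Hypothesis covalency_lam : forall x y : V, x != y -> covalency Bs x y = lam.
Hypothesis card_blocks : #|Bs| = #|V|.
Hypothesis V_gt1 : 1 < #|V|.
Hypothesis s_full : is_full_cycle s.
Hypothesis s_blocks : [set s @: B | B : {set V} in Bs] = Bs.
Local Notation v := #|V|.

Lemma translate_block n B : B \in Bs -> iter n s @: B \in Bs.
Proof.
move=> BBs; elim: n => [|n IHn]; first by rewrite imset_id.
by rewrite -s_blocks (imset_comp s (iter n s)) imset_f.
Qed.

Lemma replication_perm x : replication Bs (s x) = replication Bs x.
Proof.
rewrite /replication !card_sep_sum -{1}s_blocks.
rewrite (big_imset _ (in2W (imset_inj (@perm_inj _ s)))) /=.
by apply: eq_bigr => B _; rewrite mem_imset //; exact: perm_inj.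
Qed.

Lemma replication_cyclic x : replication Bs x = k.
Proof.
have r_const y : replication Bs y = replication Bs x.
  rewrite -(iter_cycle_index s_full x y).
  by elim: (cycle_index _ _ _) => // n IHn; rewrite iterS replication_perm.
have sum_r : \sum_(y in setT) replication Bs y = v * replication Bs x.
  by rewrite (eq_bigr _ (fun y _ => r_const y)) sum_nat_const cardsT.
have sum_k : \sum_(B in Bs) #|setT :&: B| = v * k.
  rewrite -card_blocks -sum_nat_const; apply: eq_bigr => B BBs.
  by rewrite setTI block_size.
have := sum_card_setI_blocks Bs setT; rewrite sum_r sum_k => /eqP.
by rewrite (eqn_pmul2l (ltnW V_gt1)) eq_sym => /eqP.
Qed.

Let design_eq :=
  symmetric_design_eq block_size covalency_lam replication_cyclic V_gt1.
Let lam_lt_k :=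
  lam_lt_k block_size covalency_lam card_blocks replication_cyclic V_gt1.
Let meet_blocks :=
  card_setI_blocks block_size covalency_lam card_blocks replication_cyclic V_gt1.

Lemma overlap_block B d :
  B \in Bs -> d < v -> overlap s B d = k \/ overlap s B d = lam.
Proof.
move=> BBs d_lt.
have iterK : cancel (iter d s) (iter (v - d) s).
  by move=> x; rewrite -iterD subnK ?(ltnW d_lt) ?iter_full_cycle.
have iterKV : cancel (iter (v - d) s) (iter d s).
  by move=> x; rewrite -iterD subnKC ?(ltnW d_lt) ?iter_full_cycle.
have CBs : iter d s @^-1: B \in Bs.
  by rewrite -(can2_imset_pre _ iterKV iterK) translate_block.
have -> : overlap s B d = #|B :&: iter d s @^-1: B|.
  by apply: eq_card => y; rewrite !inE.
have [<-|BC] := eqVneq B (iter d s @^-1: B).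
  by left; rewrite setIid block_size.
by right; apply: meet_blocks.
Qed.

Lemma overlap_lam B d : B \in Bs -> 0 < d < v -> overlap s B d = lam.
Proof.
move=> BBs /andP[d_gt0 d_lt]; have v_gt0 : 0 < v := ltnW V_gt1.
pose P (i : 'I_v) := i != Ordinal v_gt0.
have lam_le i : P i -> lam <= overlap s B i.
  by move=> _; case: (overlap_block BBs (ltn_ord i)) => ->; [exact: ltnW | ].
have sum_others : \sum_(i | P i) overlap s B i = \sum_(i | P i) lam.
  have := sum_overlap s_full B; rewrite (bigD1 (Ordinal v_gt0)) //= overlap0.
  rewrite (block_size BBs) -mulnn design_eq => /addnI ->.
  by rewrite sum_nat_const cardC1 card_ord.
have P_d : P (Ordinal d_lt) by rewrite /P -val_eqE /= -lt0n.
by rewrite (leq_sum_eq lam_le _ P_d) // sum_others.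
Qed.

Lemma translate_block_neq B d : B \in Bs -> 0 < d < v -> iter d s @: B != B.
Proof.
move=> BBs d_range; apply/eqP => fixB.
have : overlap s B d = k.
  rewrite -(block_size BBs); apply: eq_card => y; rewrite !inE.
  by case yB: (y \in B); rewrite //= -fixB imset_f.
by rewrite overlap_lam // => lam_k; move: lam_lt_k; rewrite lam_k ltnn.
Qed.

Lemma blocks_translates B0 :
  B0 \in Bs -> Bs = [set iter d s @: B0 | d : 'I_v].
Proof.
move=> B0Bs; apply/esym/eqP; rewrite eqEcard card_blocks; apply/andP; split.
  by apply/subsetP => _ /imsetP[d _ ->]; exact: translate_block.
rewrite card_imset ?card_ord // => d1 d2 eq12; apply/val_inj.
wlog le12 : d1 d2 eq12 / d1 <= d2.
  move=> hwlog; case/orP: (leq_total d1 d2); first exact: hwlog.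
  by move/(hwlog _ _ (esym eq12)).
apply/eqP; rewrite eqn_leq le12 leqNgt; apply/negP => lt12.
have B1Bs : iter d1 s @: B0 \in Bs by exact: translate_block.
have shift_range : 0 < d2 - d1 < v.
  by rewrite subn_gt0 lt12 (leq_ltn_trans (leq_subr _ _) (ltn_ord d2)).
apply: (elimN eqP (translate_block_neq B1Bs shift_range)).
rewrite -imset_comp eq12; apply: eq_imset => x /=.
by rewrite -iterD (subnK (ltnW lt12)).
Qed.

Local Open Scope ring_scope.

Lemma sum_overlap_prim_root (F : fieldType) (w : F) B :
    B \in Bs -> v.-primitive_root w ->
  \sum_(d < v) (overlap s B d)%:R * w ^+ d = k%:R - lam%:R.
Proof.
move=> BBs w_prim; have v_gt0 : (0 < v)%N := ltnW V_gt1.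
have := sum_prim_root_expr w_prim V_gt1.
rewrite (bigD1 (Ordinal v_gt0)) //= expr0 => /eqP.
rewrite addrC addr_eq0 => /eqP sum_others.
rewrite (bigD1 (Ordinal v_gt0)) //= overlap0 (block_size BBs) expr0 mulr1.
rewrite (eq_bigr (fun d : 'I_v => lam%:R * w ^+ d)) => [|d d_neq0].
  by rewrite -mulr_sumr sum_others mulrN1.
rewrite overlap_lam // ltn_ord andbT lt0n.
by apply: contra d_neq0 => /eqP d0; apply/eqP/val_inj.
Qed.

Lemma additive_of_block_sum0 (R : pzRingType) (f : V -> R) (c : R) B0 :
    injective f -> (forall x, f (s x) = c * f x) ->
    B0 \in Bs -> \sum_(x in B0) f x = 0 ->
  additive_under Bs R.
Proof.
move=> f_inj f_perm B0Bs sum0; exists f; split => // B.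
rewrite (blocks_translates B0Bs) => /imsetP[d _ ->].
by rewrite (sum_translate f_perm) sum0 mulr0.
Qed.

Lemma cyclic_design_additive (F : fieldType) (w : F) :
  v.-primitive_root w -> k%:R = lam%:R :> F -> additive_under Bs F.
Proof.
move=> w_prim k_eq_lam.
have /card_gt0P[B0 B0Bs] : (0 < #|Bs|)%N by rewrite card_blocks (ltnW V_gt1).
have /card_gt0P[x0 _] := ltnW V_gt1.
pose chi := cycle_power s w x0.
have chi_perm x : chi (s x) = w * chi x by exact: cycle_power_perm.
have chi_inj : injective chi by exact: cycle_power_inj.
have chi_neq0 x : chi x != 0.
  by rewrite expf_neq0 // (prim_root_eq0 w_prim) -lt0n (ltnW V_gt1).
have := sum_mul_sum_inv s_full chi_perm chi_neq0 B0.
rewrite sum_overlap_prim_root // k_eq_lam subrr => /eqP; rewrite mulf_eq0.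
case/orP => /eqP sum0.
  exact: additive_of_block_sum0 chi_inj chi_perm B0Bs sum0.
apply: (additive_of_block_sum0 (c := w^-1)) _ _ B0Bs sum0.
  by move=> x y /invr_inj /chi_inj.
by move=> x; rewrite chi_perm invfM mulrC.
Qed.

End CyclicDesign.

Lemma finField_prim_root (F : finFieldType) n :
  n %| #|F|.-1 -> exists z : F, n.-primitive_root%R z.
Proof.
have F_gt1 := finNzRing_gt1 F; move=> n_dvd.
have /hasP[z _ z_prim] :
    has (#|F|.-1).-primitive_root%R (enum (predC1 (0 : F)%R)).
  apply: has_prim_root.
  - by rewrite -ltnS (ltn_predK F_gt1).
  - apply/allP => x; rewrite mem_enum /= unity_rootE => x_neq0.
    apply/eqP/(mulfI x_neq0).
    by rewrite -exprS (ltn_predK F_gt1) expf_card mulr1.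
  - exact: enum_uniq.
  - by rewrite -cardE cardC1.
by exists (z ^+ (#|F|.-1 %/ n))%R; exact: dvdn_prim_root.
Qed.

Lemma additive_under_inj (V : finType) (Bs : {set {set V}}) (G H : zmodType)
    (f : {additive G -> H}) :
  injective f -> additive_under Bs G -> additive_under Bs H.
Proof.
move=> f_inj [g [g_inj sum0]]; exists (f \o g); split; first exact: inj_comp.
by move=> B /sum0 sum_g; rewrite -raddf_sum sum_g raddf0.
Qed.

Theorem theorem3p1 (V : finType) (Bs : {set {set V}}) (v k lambda p t : nat) :
  symmetric_design Bs v k lambda ->
  cyclic_design Bs ->
  prime p ->
  (p%:Z %| (k%:Z - lambda%:Z)%R)%Z ->
  ~~ (p %| v) ->
  is_mult_order v p t ->
  additive_under Bs 'rV['F_p]_t.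
Proof.
move=> [<- block_size covalency_lam card_blocks] [s [s_full s_blocks]] p_prime.
move=> p_dvd _ [t_gt0 p_t _].
have [V_le1|V_gt1] := leqP #|V| 1.
  exists (fun=> 0%R); split; first by move=> x y _; apply: (card_le1_eqP V_le1).
  by move=> B _; rewrite big1.
have [F F_char cardF] := pPrimePowerField p_prime t_gt0.
have [w w_prim] : exists w : F, #|V|.-primitive_root%R w.
  apply: finField_prim_root; rewrite cardF -subn1.
  by rewrite -eqn_mod_dvd ?expn_gt0 ?prime_gt0 //; apply/eqP.
have k_eq_lam : (k%:R = lambda%:R :> F)%R.
  apply/eqP; rewrite -subr_eq0; move: p_dvd; rewrite (dvdz_pcharf F_char).
  by rewrite rmorphB.
have F_add := cyclic_design_additive block_size covalency_lam card_blocks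
  V_gt1 s_full s_blocks w_prim k_eq_lam.
have dimF : \dim {: pPrimeCharType F_char} = t.
  by rewrite pprimeChar_dimf -[t](pfactorK t p_prime) -cardF.
pose E := (fullv : {vspace pPrimeCharType F_char}).
rewrite -dimF; exact: additive_under_inj (can_inj (rVofK (vbasisP E))) F_add.
Qed.
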